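(* Let $F=\breve F(\alpha_1,\dots,\alpha_t)$ be a fence, let $i\in[t]$ with $\alpha_i\ge2$, let $v$ be the valley of $S_i$ (if it exists) and $p$ the peak of $S_i$ (if it exists). Then for each $j\in[\beta_i]$, as functions on $\mathcal J(F)$, \[ \alpha_i\hat\chi_{(i,j)}-j\hat\chi_p-(\alpha_i-j)\hat\chi_v=\mathbf 1(S_i\text{ has no valley})(\alpha_i-j)-(\alpha_i-j)\!\!\sum_{s_{(i,1)}\trianglelefteq u\trianglelefteq s_{(i,j)}}\!\!\#[s_{(i,1)},u]\,T_u-j\!\!\sum_{s_{(i,j)}\vartriangleleft u\trianglelefteq s_{(i,\beta_i)}}\!\!\#[u,s_{(i,\beta_i)}]\,T_u, \] where $[a,b]$ denotes an interval of $F$ and $\mathbf 1(\cdot)$ is $1$ if the statement holds and $0$ otherwise.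
   Context: Fences: let $\alpha=(\alpha_1,\dots,\alpha_t)$ be positive integers with $t\ge2$ and $\alpha_1,\alpha_t\ge2$. Put $a_0=0$, $a_i=\alpha_1+\dots+\alpha_i$, $n=a_t-1$. The fence $\breve F(\alpha)$ is the poset (order $\trianglelefteq$) on $\{x_1,\dots,x_n\}$ whose cover relations are: for $1\le j\le n-1$ with $a_{i-1}\le j<a_i$, $x_j\lessdot x_{j+1}$ if $i$ is odd and $x_j\gtrdot x_{j+1}$ if $i$ is even. Segments: $S_1=\{x_j:1\le j\le a_1\}$, $S_i=\{x_j:a_{i-1}\le j\le a_i\}$ for $2\le i\le t-1$, $S_t=\{x_j:a_{t-1}\le j\le n\}$ (each a chain). Shared elements $x_{a_i}$, $i\in[t-1]$, are peaks (cover two elements) for $i$ odd and valleys (covered by two elements) for $i$ even; the peak (valley) of $S_i$ is the shared element of $S_i$ that is a peak (valley), if any. $\breve S_i$ is the set of non-shared elements of $S_i$, $\beta_i=\#\breve S_i=\alpha_i-1$, $s_{(i,j)}$ is the $j$-th smallest element of $\breve S_i$. For $q\in F$ and an order ideal $I\in\mathcal J(F)$: $\hat\chi_q(I)=1$ if $q\in I$, else $0$; $T_q(I)=1$ if $q\in\min(F\setminus I)$, $-1$ if $q\in\max(I)$, $0$ otherwise. Write $\hat\chi_{(i,j)}=\hat\chi_{s_{(i,j)}}$. Convention: statistics indexed by nonexistent elements are identically zero. *)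

(* Fence \breve F(alpha) with alpha given as a seq nat
   (alpha_i = nth 0 alpha (i-1), 1-indexed, t = size alpha).
   The ground set {x_1,...,x_n} is represented by 'I_n, with x_j <-> ordinal (j-1). *)
From mathcomp Require Import all_boot all_order all_algebra.
Import GRing.Theory Num.Theory.

Section Fence.
Variable alpha : seq nat.

Definition ft : nat := size alpha.
Definition alph (i : nat) : nat := nth 0 alpha i.-1.
Definition beta (i : nat) : nat := alph i - 1.
Definition apart (i : nat) : nat := \sum_(1 <= k < i.+1) alph k.
Definition fn : nat := (apart ft).-1.

Definition idx (u : 'I_fn) : nat := (nat_of_ord u).+1.

Definition cov (u v : 'I_fn) : bool :=
  ((idx v == (idx u).+1) &&
     has (fun i => odd i && (apart i.-1 <= idx u < apart i)) (iota 1 ft))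
  || ((idx u == (idx v).+1) &&
     has (fun i => ~~ odd i && (apart i.-1 <= idx v < apart i)) (iota 1 ft)).

Definition fle (u v : 'I_fn) : bool := connect cov u v.
Definition flt (u v : 'I_fn) : bool := (u != v) && fle u v.

Definition seg (i : nat) : {set 'I_fn} :=
  if i == 1 then [set u | idx u <= apart 1]
  else if i == ft then [set u | apart ft.-1 <= idx u <= fn]
  else [set u | apart i.-1 <= idx u <= apart i].

Definition shared : {set 'I_fn} :=
  [set u | has (fun k => idx u == apart k) (iota 1 ft.-1)].

Definition bseg (i : nat) : {set 'I_fn} := seg i :\: shared.

Definition is_peak (u : 'I_fn) : bool := #|[set w | cov w u]| == 2.
Definition is_valley (u : 'I_fn) : bool := #|[set w | cov u w]| == 2.

Definition peakS (i : nat) : option 'I_fn :=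
  [pick u in seg i | (u \in shared) && is_peak u].
Definition valleyS (i : nat) : option 'I_fn :=
  [pick u in seg i | (u \in shared) && is_valley u].

Definition sel (i j : nat) : option 'I_fn :=
  [pick u in bseg i | #|[set w in bseg i | fle w u]| == j].

Definition is_ideal (I : {set 'I_fn}) : Prop :=
  forall u v : 'I_fn, fle u v -> v \in I -> u \in I.

(* statistics; nonexistent elements (None) give the zero statistic *)
Definition chi (o : option 'I_fn) (I : {set 'I_fn}) : int :=
  if o is Some q then ((q \in I) : nat)%:Z else 0.

Definition minC (I : {set 'I_fn}) (q : 'I_fn) : bool :=
  (q \notin I) && [forall w, (w \notin I) ==> ~~ flt w q].
Definition maxI (I : {set 'I_fn}) (q : 'I_fn) : bool :=
  (q \in I) && [forall w, (w \in I) ==> ~~ flt q w].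

Definition Tst (o : option 'I_fn) (I : {set 'I_fn}) : int :=
  if o is Some q then
    (if minC I q then 1 else if maxI I q then -1 else 0)%R
  else 0.

Definition ole (o1 o2 : option 'I_fn) : bool :=
  match o1, o2 with Some a, Some b => fle a b | _, _ => false end.
Definition olt (o1 o2 : option 'I_fn) : bool :=
  match o1, o2 with Some a, Some b => flt a b | _, _ => false end.

Definition icard (o1 o2 : option 'I_fn) : nat :=
  #|[set w | ole o1 (Some w) && ole (Some w) o2]|.

End Fence.

From mathcomp Require Import all_boot all_order all_algebra.
From mathcomp Require Import zify ring.
Import GRing.Theory.

Set Implicit Arguments.
Unset Strict Implicit.
Unset Printing Implicit Defensive.

(* The segment S_i is a chain from its valley to its peak, of length alpha_i,
   whose interior elements s_(i,h) (0 < h < alpha_i) are covered only by their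
   two chain neighbours.  Hence, if e_h records whether the h-th element of the
   chain lies in the order ideal I, then T at s_(i,h) is the second difference
   e_(h-1) - 2 e_h + e_(h+1), while #[s_(i,1), s_(i,h)] = h and
   #[s_(i,h), s_(i,beta_i)] = alpha_i - h.  The identity is then summation by
   parts against the Green's function of the second difference on
   {0, ..., alpha_i}, whose boundary values e_0 and e_(alpha_i) are the
   statistics of the valley and the peak. *)

Section SecondDifference.
Local Open Scope ring_scope.
Variable R : comPzRingType.
Implicit Type e : nat -> R.

Definition diff2 e h := e h.-1 - e h *+ 2 + e h.+1.

Lemma sum_diff2_linear e (c : R) m n : (m <= n)%N ->
  \sum_(m.+1 <= h < n.+1) (c - h%:R) * diff2 e h
  = (c - n%:R) * (e n.+1 - e n) - (c - m.+1%:R) * (e m.+1 - e m) + e n - e m.+1.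
Proof.
move/subnKC <-; elim: (n - m)%N => [|d IH].
  by rewrite addn0 big_geq // -natr1; ring.
rewrite addnS big_nat_recr /= ?IH; last by lia.
by rewrite /diff2 -!natr1; ring.
Qed.

Lemma diff2_green e a j : (j < a)%N ->
  (a%:R - j%:R) * \sum_(1 <= h < j.+1) h%:R * diff2 e h
  + j%:R * \sum_(j.+1 <= h < a) (a%:R - h%:R) * diff2 e h
  = (a%:R - j%:R) * e 0%N + j%:R * e a - a%:R * e j.
Proof.
case: a => // b lt_jb.
have lower := sum_diff2_linear e 0 (leq0n j).
have upper := @sum_diff2_linear e b.+1%:R j b lt_jb.
rewrite -[\sum_(1 <= h < j.+1) _]opprK -sumrN.
under eq_bigr do rewrite -mulNr -[- _%:R]add0r.
by rewrite lower upper -!natr1; ring.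
Qed.

End SecondDifference.

Lemma connect_first (T : finType) (r : rel T) x y :
  connect r x y -> x != y -> exists2 z, r x z & connect r z y.
Proof.
move=> /connectP[[|z p] /= pth ->]; first by rewrite eqxx.
by case/andP: pth => rxz pth _; exists z => //; apply/connectP; exists p.
Qed.

Lemma connect_last (T : finType) (r : rel T) x y :
  connect r x y -> x != y -> exists2 z, connect r x z & r z y.
Proof.
move=> /connectP[p]; case/lastP: p => [|p z] /=; first by move=> _ ->; rewrite eqxx.
rewrite rcons_path last_rcons => /andP[pth rz] -> _.
by exists (last x p) => //; apply/connectP; exists p.
Qed.

Lemma card_set_pred2 (T : finType) (P : pred T) a b : a != b ->
  (forall w, P w -> w = a \/ w = b) -> #|[set w | P w]| = (P a + P b)%N.
Proof.
move=> ab Pab; have /card_uniqP card_ab : uniq [seq w <- [:: a; b] | P w].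
  by rewrite filter_uniq //= inE ab.
have -> : (P a + P b = count P [:: a; b])%N by rewrite /= addn0.
rewrite -size_filter -card_ab.
apply: eq_card => w; rewrite in_set mem_filter !inE.
by case Pw: (P w) => //=; case: (Pab w Pw) => ->; rewrite eqxx ?orbT.
Qed.

Section Fence.
Variable alpha : seq nat.
Local Notation N := (fn alpha).
Local Notation ap := (apart alpha).
Local Notation t := (ft alpha).
Local Notation idx := (idx alpha).
Local Notation fle := (fle alpha).

Definition rise k := has (fun i => odd i && (ap i.-1 <= k < ap i)) (iota 1 t).
Definition fall k := has (fun i => ~~ odd i && (ap i.-1 <= k < ap i)) (iota 1 t).

Lemma covE u v : cov alpha u v =
  ((idx v == (idx u).+1) && rise (idx u)) || ((idx u == (idx v).+1) && fall (idx v)).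
Proof. by []. Qed.

Lemma apart0 : ap 0 = 0.
Proof. by rewrite /apart big_geq. Qed.

Lemma apartS k : ap k.+1 = ap k + alph alpha k.+1.
Proof. by rewrite /apart big_nat_recr. Qed.

Lemma apart_pred k : 0 < k -> ap k = ap k.-1 + alph alpha k.
Proof. by case: k => // k _; rewrite apartS. Qed.

Lemma leq_apart k l : k <= l -> ap k <= ap l.
Proof.
move/subnKC <-; elim: (l - k) => [|d IH]; first by rewrite addn0.
by rewrite addnS apartS; apply: leq_trans IH (leq_addr _ _).
Qed.

Lemma step_segment_uniq k i i' :
  ap i.-1 <= k < ap i -> ap i'.-1 <= k < ap i' -> i = i'.
Proof.
move=> ki ki'; case: (ltngtP i i') => // [lt|lt].
- by have := @leq_apart i i'.-1; lia.
- by have := @leq_apart i' i.-1; lia.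
Qed.

Lemma has_step_segment (p : pred nat) i k : 0 < i <= t -> ap i.-1 <= k < ap i ->
  has (fun i' => p i' && (ap i'.-1 <= k < ap i')) (iota 1 t) = p i.
Proof.
move=> it ki; apply/hasP/idP => [[i' _ /andP[pi' ki']]|pi].
  by rewrite (step_segment_uniq ki ki').
by exists i; rewrite ?mem_iota ?pi ?ki //; lia.
Qed.

Lemma steps_segment i k : 0 < i <= t -> ap i.-1 <= k < ap i ->
  rise k = odd i /\ fall k = ~~ odd i.
Proof.
by move=> it ki; rewrite /rise /fall !(has_step_segment (fun i => _) it ki).
Qed.

Lemma rise_fall k : rise k -> fall k -> False.
Proof.
move=> /hasP[i _ /andP[oi ki]] /hasP[i' _ /andP[oi' ki']].
by rewrite -(step_segment_uniq ki ki') oi in oi'.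
Qed.

Lemma idx_inj : injective idx.
Proof. by move=> u v [] /val_inj. Qed.

Lemma idx_range u : 0 < idx u <= N.
Proof. by rewrite /idx /=. Qed.

Lemma fle_steps u v : fle u v ->
  (forall k, idx u <= k < idx v -> rise k) /\ (forall k, idx v <= k < idx u -> fall k).
Proof.
move/connectP=> [p]; elim: p u => [|w p IH] u /=; first by move=> _ ->; split=> k; lia.
case/andP; rewrite covE => cuw /IH /[apply] -[rwv fwv].
case/orP: cuw => /andP[/eqP e s]; split=> k kr.
- by case: (eqVneq k (idx u)) => [-> //|ne]; apply: rwv; lia.
- by apply: fwv; lia.
- by apply: rwv; lia.
- by case: (eqVneq k (idx w)) => [-> //|ne]; apply: fwv; lia.
Qed.

Lemma fle_trans u v w : fle u v -> fle v w -> fle u w.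
Proof. exact: connect_trans. Qed.

Lemma fle_anti : antisymmetric fle.
Proof.
move=> u v /andP[/fle_steps[ruv fuv] /fle_steps[rvu fvu]].
case: (ltngtP (idx u) (idx v)) => [lt|lt|]; last exact: idx_inj.
- by case: (@rise_fall (idx u)); [apply: ruv | apply: fvu]; lia.
- by case: (@rise_fall (idx v)); [apply: rvu | apply: fuv]; lia.
Qed.

Definition elt k : option 'I_N := [pick u | idx u == k].

Lemma elt_idx u : elt (idx u) = Some u.
Proof. by rewrite /elt; case: pickP => [v /eqP/idx_inj -> | /(_ u)]; rewrite ?eqxx. Qed.

Lemma elt_some k u : elt k = Some u -> idx u = k.
Proof. by rewrite /elt; case: pickP => // v /eqP <- [<-]. Qed.

Lemma elt_exists k : 0 < k <= N -> exists u, elt k = Some u.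
Proof.
move=> kN; have kN' : k.-1 < N by lia.
by exists (Ordinal kN'); rewrite -elt_idx /idx /=; congr elt; lia.
Qed.

Lemma peak_valleyE u : 1 < idx u < N ->
  is_peak alpha u = rise (idx u).-1 && fall (idx u)
  /\ is_valley alpha u = fall (idx u).-1 && rise (idx u).
Proof.
move=> uN.
have [a /elt_some ia] : exists a, elt (idx u).-1 = Some a by apply: elt_exists; lia.
have [b /elt_some ib] : exists b, elt (idx u).+1 = Some b by apply: elt_exists; lia.
have ab : a != b by apply/eqP => /(congr1 idx); lia.
have nbr w : ((idx u).-1 == idx w) || ((idx u).+1 == idx w) -> w = a \/ w = b.
  by case/orP => /eqP e; [left | right]; apply: idx_inj; lia.
have pair2 (x y : bool) : (x + y == 2) = x && y by case: x; case: y.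
rewrite /is_peak /is_valley !(card_set_pred2 ab); first last.
- by move=> w; rewrite covE => /orP[]/andP[/eqP e _]; apply: nbr; lia.
- by move=> w; rewrite covE => /orP[]/andP[/eqP e _]; apply: nbr; lia.
have [ne1 ne2] : ((idx u).-1 == (idx u).+1) = false /\ (idx u == (idx u).+2) = false.
  by split; apply/negbTE; lia.
by rewrite !covE ia ib !eqxx ne1 ne2 !andTb !andFb !orbF !pair2.
Qed.

Section Segment.
Hypothesis two_le_t : 2 <= t.
Hypothesis alpha_gt0 : all (fun a => 0 < a) alpha.
Hypothesis two_le_alpha1 : 2 <= alph alpha 1.
Hypothesis two_le_alphat : 2 <= alph alpha t.

Lemma alph_gt0 k : 0 < k <= t -> 0 < alph alpha k.
Proof.
rewrite /ft => kt; have kt' : k.-1 < size alpha by lia.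
exact: (allP alpha_gt0) _ (mem_nth 0 kt').
Qed.

Lemma ltn_apart k l : k < l <= t -> ap k < ap l.
Proof.
case: l => // l kl; rewrite apartS.
by have := @leq_apart k l; have := @alph_gt0 l.+1; lia.
Qed.

Lemma two_le_apart k : 0 < k -> 2 <= ap k.
Proof. by move=> k0; have := @leq_apart 1 k; rewrite apartS apart0; lia. Qed.

Lemma apart_t : ap t = N.+1.
Proof. by rewrite /fn prednK // (leq_trans _ (two_le_apart _)); lia. Qed.

Lemma apart_ltN k : k < t -> ap k < N.
Proof.
move=> kt; have := @leq_apart k t.-1; have := apart_t.
by rewrite apart_pred; lia.
Qed.

Variable i : nat.
Hypothesis i_in : 0 < i <= t.
Hypothesis two_le_alphai : 2 <= alph alpha i.
Local Notation L := (ap i.-1).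
Local Notation R := (ap i).
Local Notation A := (alph alpha i).

Lemma apart_i : R = L + A.
Proof. by rewrite apart_pred; lia. Qed.

Lemma idx_L u : idx u = L -> 1 < i.
Proof. by have := idx_range u; case: i i_in => [|[|]] //; rewrite apart0; lia. Qed.

Lemma idx_R u : idx u = R -> i < t.
Proof.
move=> e; case: (ltngtP i t) => [// | | it]; first by lia.
by have := idx_range u; have := apart_t; rewrite -it; lia.
Qed.

Lemma seg_iff u : (u \in seg alpha i) = (L <= idx u <= R).
Proof.
have := idx_range u; have := apart_t.
rewrite /seg; case: eqP => [-> | _]; first by rewrite apart0 inE.
by case: eqP => [e|_]; rewrite inE // -e; lia.
Qed.

Lemma sharedP u :
  reflect (exists2 k, 0 < k < t & idx u = ap k) (u \in shared alpha).
Proof.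
rewrite inE; apply: (iffP hasP) => [[k] | [k]].
  by rewrite mem_iota => kt /eqP; exists k => //; lia.
by exists k; [rewrite mem_iota; lia | apply/eqP].
Qed.

Lemma shared_seg u : u \in seg alpha i ->
  (u \in shared alpha) = (idx u == L) || (idx u == R).
Proof.
rewrite seg_iff => uLR; apply/sharedP/idP => [[k kt e] | ].
  case: (ltngtP k i.-1) => [? | ? | ek]; last by rewrite e ek eqxx.
    by have := @ltn_apart k i.-1; lia.
  case: (ltngtP k i) => [? | ? | ek]; first by lia.
    by have := @ltn_apart i k; lia.
  by rewrite e ek eqxx orbT.
case/orP => /eqP e.
  by exists i.-1 => //; have := idx_L e; lia.
by exists i => //; have := idx_R e; lia.
Qed.

Lemma bseg_iff u : (u \in bseg alpha i) = (L < idx u < R).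
Proof.
rewrite inE; case: (boolP (u \in seg alpha i)) => us.
  by rewrite shared_seg //; move: us; rewrite seg_iff; case: eqP; case: eqP => /=; lia.
by rewrite andbF; move: us; rewrite seg_iff; lia.
Qed.

Lemma steps_before : 1 < i -> rise L.-1 = ~~ odd i /\ fall L.-1 = odd i.
Proof.
case: i i_in => [|[|i']] // it _.
have lt : ap i' < ap i'.+1 by apply: ltn_apart; lia.
have [-> ->] : rise (ap i'.+1).-1 = odd i'.+1 /\ fall (ap i'.+1).-1 = ~~ odd i'.+1.
  by apply: steps_segment => /=; lia.
by rewrite /= negbK.
Qed.

Lemma steps_after : i < t -> rise R = ~~ odd i /\ fall R = odd i.
Proof.
move=> it; have lt : R < ap i.+1 by apply: ltn_apart; lia.
have [-> ->] : rise R = odd i.+1 /\ fall R = ~~ odd i.+1 by apply: steps_segment => /=; lia.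
by rewrite /= negbK.
Qed.

Lemma rise_inside k : L <= k < R -> rise k = odd i.
Proof. by move/(steps_segment i_in) => []. Qed.

Lemma fall_inside k : L <= k < R -> fall k = ~~ odd i.
Proof. by move/(steps_segment i_in) => []. Qed.

Lemma N_gt0 : 0 < N.
Proof. exact: leq_ltn_trans (leq0n _) (apart_ltN two_le_t). Qed.

Lemma R_leN : R <= N.+1.
Proof. by rewrite -apart_t leq_apart //; lia. Qed.

(* S_i = {x_L, ..., x_R} ascends iff i is odd; [seg_at h] is its h-th element
   from the bottom, so [seg_at 0] is the valley and [seg_at A] the peak, when
   they exist.  [seg_pt h] is meaningful only for 0 < h < A. *)
Definition seg_pos h := if odd i then L + h else R - h.
Definition seg_at h := elt (seg_pos h).
Definition seg_pt h : 'I_N := odflt (Ordinal N_gt0) (seg_at h).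

Lemma seg_pos_range h : h <= A -> L <= seg_pos h <= R.
Proof. by rewrite /seg_pos apart_i; case: odd; lia. Qed.

Lemma seg_pos_inside h : h <= A -> (L < seg_pos h < R) = (0 < h < A).
Proof. by rewrite /seg_pos apart_i; case: odd => hA; apply/idP/idP; lia. Qed.

Lemma eq_seg_pos h h' : h <= A -> h' <= A -> (seg_pos h == seg_pos h') = (h == h').
Proof. by rewrite /seg_pos apart_i; case: odd => hA h'A; apply/eqP/eqP; lia. Qed.

Lemma seg_at_idx h u : seg_at h = Some u -> idx u = seg_pos h.
Proof. exact: elt_some. Qed.

Lemma seg_at_inj h h' u : h <= A -> h' <= A ->
  seg_at h = Some u -> seg_at h' = Some u -> h = h'.
Proof.
by move=> hA h'A /seg_at_idx eu /seg_at_idx; rewrite eu => /eqP; rewrite eq_seg_pos // => /eqP.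
Qed.

Lemma seg_atE h : 0 < h < A -> seg_at h = Some (seg_pt h).
Proof.
move=> hA; have [u eu] : exists u, seg_at h = Some u.
  by apply: elt_exists; have := seg_pos_inside (ltnW (proj2 (andP hA))); have := R_leN; lia.
by rewrite /seg_pt eu.
Qed.

Lemma seg_pt_inj h h' : 0 < h < A -> 0 < h' < A -> seg_pt h = seg_pt h' -> h = h'.
Proof.
move=> hA h'A e; apply: (@seg_at_inj h h' (seg_pt h)); rewrite ?seg_atE ?e //; lia.
Qed.

Lemma seg_at_rank u : L <= idx u <= R -> exists2 h, h <= A & seg_at h = Some u.
Proof.
move=> uLR; exists (if odd i then idx u - L else R - idx u).
  by rewrite apart_i in uLR *; case: odd; lia.
by rewrite /seg_at -elt_idx /seg_pos; congr elt; rewrite apart_i in uLR *; case: odd; lia.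
Qed.

Lemma seg_at_none h : h <= A -> seg_at h = None -> h = 0 \/ h = A.
Proof.
move=> hA eh; case: (posnP h) => [-> | h0]; [by left | right].
case: (ltngtP h A) => [hlt | | //]; last by lia.
by move: eh; rewrite seg_atE //; lia.
Qed.

Lemma bseg_seg_pt u : reflect (exists2 h, 0 < h < A & u = seg_pt h) (u \in bseg alpha i).
Proof.
rewrite bseg_iff; apply: (iffP idP) => [uLR | [h hA ->]].
  have [h hA eu] : exists2 h, h <= A & seg_at h = Some u by apply: seg_at_rank; lia.
  have hA' : 0 < h < A by rewrite -seg_pos_inside // -(seg_at_idx eu).
  by exists h => //; move: eu; rewrite seg_atE // => -[].
by rewrite (seg_at_idx (seg_atE hA)) seg_pos_inside //; lia.
Qed.

Lemma cov_seg_at h u v : h < A -> seg_at h = Some u -> seg_at h.+1 = Some v -> cov alpha u v.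
Proof.
move=> hA /seg_at_idx eu /seg_at_idx ev; have RL := apart_i.
rewrite covE eu ev /seg_pos; case: (boolP (odd i)) => oi; apply/orP.
  by left; rewrite rise_inside ?oi ?andbT; [apply/eqP | ]; lia.
by right; rewrite fall_inside ?oi ?andbT; [apply/eqP | ]; lia.
Qed.

Lemma cov_seg_at_down k u w : 0 < k < A -> seg_at k = Some u -> cov alpha w u ->
  seg_at k.-1 = Some w.
Proof.
move=> kA /seg_at_idx eu c; have RL := apart_i.
suff e : idx w = seg_pos k.-1 by rewrite /seg_at -e elt_idx.
move: eu c; rewrite covE /seg_pos; case: (boolP (odd i)) => oi eu.
  case/orP=> /andP[/eqP e s]; first by lia.
  by move: s; rewrite eu fall_inside ?oi //; lia.
case/orP=> /andP[/eqP e s]; last by lia.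
by move: s; rewrite rise_inside ?(negbTE oi) //; lia.
Qed.

Lemma cov_seg_at_up k u w : 0 < k < A -> seg_at k = Some u -> cov alpha u w ->
  seg_at k.+1 = Some w.
Proof.
move=> kA /seg_at_idx eu c; have RL := apart_i.
suff e : idx w = seg_pos k.+1 by rewrite /seg_at -e elt_idx.
move: eu c; rewrite covE /seg_pos; case: (boolP (odd i)) => oi eu.
  case/orP=> /andP[/eqP e s]; first by lia.
  by move: s; rewrite fall_inside ?oi //; lia.
case/orP=> /andP[/eqP e s]; last by lia.
by move: s; rewrite eu rise_inside ?(negbTE oi) //; lia.
Qed.

Lemma fle_seg_at h h' u v : h <= h' -> h' <= A ->
  seg_at h = Some u -> seg_at h' = Some v -> fle u v.
Proof.
move/subnKC <-; elim: (h' - h) v => [|d IH] v hdA eu ev.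
  by move: ev; rewrite addn0 eu => -[->]; apply: connect0.
have [w ew] : exists w, seg_at (h + d) = Some w.
  case: d {IH ev} hdA => [|d] hdA; first by exists u; rewrite addn0.
  by exists (seg_pt (h + d.+1)); apply: seg_atE; lia.
have fuw : fle u w by apply: IH => //; lia.
have cwv : cov alpha w v by apply: (cov_seg_at _ ew); rewrite -?addnS //; lia.
exact: fle_trans fuw (connect1 cwv).
Qed.

Lemma leq_seg_at h h' u v : h <= A -> h' <= A ->
  seg_at h = Some u -> seg_at h' = Some v -> fle u v = (h <= h').
Proof.
move=> hA h'A eu ev; case: (leqP h h') => hh'; first exact: fle_seg_at eu ev.
apply/negP => fuv; have fvu := fle_seg_at (ltnW hh') hA ev eu.
have euv : u = v by apply: fle_anti; rewrite fuv fvu.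
by rewrite euv in eu; have := seg_at_inj hA h'A eu ev; lia.
Qed.

Lemma flt_seg_at h h' u v : h < h' -> h' <= A ->
  seg_at h = Some u -> seg_at h' = Some v -> flt alpha u v.
Proof.
move=> hh' h'A eu ev; rewrite /flt (fle_seg_at (ltnW hh') h'A eu ev) andbT.
have hA : h <= A by lia.
by apply: contraTneq hh' => euv; rewrite euv in eu; rewrite (seg_at_inj hA h'A eu ev) ltnn.
Qed.

Lemma leq_seg_pt h h' : 0 < h < A -> 0 < h' < A -> fle (seg_pt h) (seg_pt h') = (h <= h').
Proof. by move=> hA h'A; apply: leq_seg_at (seg_atE _) (seg_atE _); lia. Qed.

Lemma flt_seg_at_down k u w : 0 < k < A -> seg_at k = Some u -> flt alpha w u ->
  exists2 d, seg_at k.-1 = Some d & fle w d.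
Proof.
move=> kA eu /andP[wu /connect_last] [] // d wd du.
by exists d => //; apply: cov_seg_at_down kA eu du.
Qed.

Lemma flt_seg_at_up k u w : 0 < k < A -> seg_at k = Some u -> flt alpha u w ->
  exists2 d, seg_at k.+1 = Some d & fle d w.
Proof.
move=> kA eu /andP[uw /connect_first] [] // d ud dw.
by exists d => //; apply: cov_seg_at_up kA eu ud.
Qed.

Lemma seg_interval a b u : 0 < a -> a <= b -> b < A ->
  fle (seg_pt a) u -> fle u (seg_pt b) -> exists2 h, a <= h <= b & u = seg_pt h.
Proof.
move=> a0; elim: b => [|b IH] ab bA au ub; first by lia.
case: (eqVneq u (seg_pt b.+1)) => [-> | ne]; first by exists b.+1 => //; lia.
case: (eqVneq a b.+1) => [eab | nab].
  by case/eqP: ne; apply: fle_anti; rewrite ub -eab au.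
have [d ed ud] : exists2 d, seg_at b = Some d & fle u d.
  apply: (@flt_seg_at_down b.+1 (seg_pt b.+1)); first by lia.
    by apply: seg_atE; lia.
  by rewrite /flt ne.
move: ed; rewrite seg_atE; last by lia.
case=> ed; rewrite -ed in ud; have {}ab : a <= b by lia.
by have [h hab ->] := IH ab (ltnW bA) au ud; exists h => //; lia.
Qed.

Definition seg_chain a b := [seq seg_pt h | h <- index_iota a b.+1].

Lemma uniq_seg_chain a b : 0 < a -> b < A -> uniq (seg_chain a b).
Proof.
move=> a0 bA; rewrite map_inj_in_uniq ?iota_uniq // => h h'.
by rewrite !mem_index_iota => ? ?; apply: seg_pt_inj; lia.
Qed.

Lemma mem_seg_chain a b u : 0 < a -> a <= b -> b < A ->
  (u \in seg_chain a b) = fle (seg_pt a) u && fle u (seg_pt b).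
Proof.
move=> a0 ab bA; apply/mapP/andP => [[h] | [au ub]].
  by rewrite mem_index_iota => hab ->; rewrite !leq_seg_pt; lia.
by have [h hab ->] := seg_interval a0 ab bA au ub; exists h => //; rewrite ?mem_index_iota; lia.
Qed.

Lemma mem_seg_chainS a b u : 0 < a -> a <= b -> b < A ->
  (u \in seg_chain a.+1 b) = flt alpha (seg_pt a) u && fle u (seg_pt b).
Proof.
move=> a0 ab bA; rewrite /flt -andbA -mem_seg_chain //.
apply/mapP/andP => [[h] | [ne /mapP[h]]].
  rewrite mem_index_iota => hab ->; split; last by apply/mapP; exists h => //; rewrite mem_index_iota; lia.
  by apply/eqP => /seg_pt_inj; lia.
rewrite mem_index_iota => hab eu; exists h => //; rewrite mem_index_iota.
by case: (eqVneq h a) => [eha | ]; [rewrite eu eha eqxx in ne | lia].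
Qed.

Lemma card_seg_chain a b : 0 < a -> b < A -> #|seg_chain a b| = b.+1 - a.
Proof. by move=> a0 bA; rewrite (card_uniqP _) ?uniq_seg_chain // size_map size_iota. Qed.

Lemma icard_seg_pt a b : 0 < a -> a <= b -> b < A ->
  icard alpha (Some (seg_pt a)) (Some (seg_pt b)) = b.+1 - a.
Proof.
move=> a0 ab bA; rewrite -card_seg_chain //.
by apply: eq_card => u; rewrite inE mem_seg_chain.
Qed.

Lemma big_seg_chain (V : nmodType) a b (P : pred 'I_N) (F : 'I_N -> V) :
  0 < a -> b < A -> (forall u, P u = (u \in seg_chain a b)) ->
  (\sum_(u | P u) F u = \sum_(a <= h < b.+1) F (seg_pt h))%R.
Proof.
move=> a0 bA PE; rewrite -(big_map seg_pt xpredT) big_uniq ?uniq_seg_chain //.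
by apply: eq_bigl => u; rewrite PE.
Qed.

Lemma seg_peak_valleyE u : u \in seg alpha i ->
  ((u \in shared alpha) && is_peak alpha u = (idx u == seg_pos A))
  /\ ((u \in shared alpha) && is_valley alpha u = (idx u == seg_pos 0)).
Proof.
move=> us; rewrite shared_seg //; move: us; rewrite seg_iff /seg_pos => uLR.
have RL := apart_i; have := R_leN.
case: (eqVneq (idx u) L) => [eL | nL] /=.
  have i2 := idx_L eL; have L1 : 1 < L by apply: two_le_apart; lia.
  have LN : L < N by apply: apart_ltN; lia.
  have urng : 1 < idx u < N by lia.
  have [pk vl] := peak_valleyE urng.
  rewrite pk vl eL (steps_before i2).1 (steps_before i2).2 rise_inside ?fall_inside; try lia.
  by case: (odd i) => /=; split; apply/esym/eqP; lia.
case: (eqVneq (idx u) R) => [eR | nR] /=; last first.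
  by case: (odd i); split; apply/esym/negbTE; lia.
have it := idx_R eR; have R1 : 1 < R by apply: two_le_apart; lia.
have RN : R < N by apply: apart_ltN.
have urng : 1 < idx u < N by lia.
have [pk vl] := peak_valleyE urng.
rewrite pk vl eR (steps_after it).1 (steps_after it).2 rise_inside ?fall_inside; try lia.
by case: (odd i) => /=; split; apply/esym/eqP; lia.
Qed.

Lemma peakS_seg_at : peakS alpha i = seg_at A.
Proof.
rewrite /peakS /seg_at /elt; apply: eq_pick => u /=.
case: (boolP (u \in seg alpha i)) => us; first exact: (seg_peak_valleyE us).1.
apply/esym/negP => /eqP e; move: us; rewrite seg_iff e seg_pos_range //.
Qed.

Lemma valleyS_seg_at : valleyS alpha i = seg_at 0.
Proof.
rewrite /valleyS /seg_at /elt; apply: eq_pick => u /=.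
case: (boolP (u \in seg alpha i)) => us; first exact: (seg_peak_valleyE us).2.
apply/esym/negP => /eqP e; move: us; rewrite seg_iff e seg_pos_range //.
Qed.

Lemma sel_seg_pt k : 0 < k < A -> sel alpha i k = Some (seg_pt k).
Proof.
move=> kA; rewrite -seg_atE // /sel /seg_at /elt; apply: eq_pick => u /=.
case: bseg_seg_pt => [[h hA ->] | nb] /=.
  have -> : #|[set w in bseg alpha i | fle w (seg_pt h)]| = h.
    have h1 : 1 <= h by lia.
    have hA' : h < A by lia.
    transitivity #|seg_chain 1 h|; last by rewrite card_seg_chain // subn1.
    apply: eq_card => w; rewrite in_set mem_seg_chain //.
    apply/andP/andP => [[/bseg_seg_pt [h' h'A ->] wh] | [w1 wh]]; last first.
      have [h' h'h ->] := seg_interval (ltnSn 0) h1 hA' w1 wh.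
      by split; [apply/bseg_seg_pt; exists h' => //; lia | rewrite leq_seg_pt //; lia].
    by rewrite !leq_seg_pt in wh *; lia.
  by rewrite (seg_at_idx (seg_atE hA)) eq_seg_pos //; lia.
apply/esym/negP => /eqP e; apply: nb; exists k => //.
by apply: idx_inj; rewrite e (seg_at_idx (seg_atE kA)).
Qed.

Variable I : {set 'I_N}.
Hypothesis I_ideal : is_ideal alpha I.

(* A missing valley counts as lying in I and a missing peak as not, which keeps
   [in_ideal_at] antitone in h. *)
Definition in_ideal_at h : bool := if seg_at h is Some u then u \in I else h == 0.

Lemma in_ideal_atW h : h < A -> in_ideal_at h.+1 -> in_ideal_at h.
Proof.
rewrite /in_ideal_at => hA; case ev: (seg_at h.+1) => [v|] // vI.
case eu: (seg_at h) => [u|]; first exact: I_ideal (fle_seg_at (leqnSn h) hA eu ev) vI.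
by have [-> | ] := seg_at_none (ltnW hA) eu; last lia.
Qed.

Lemma in_ideal_at_seg_pt k : 0 < k < A -> in_ideal_at k = (seg_pt k \in I).
Proof. by move=> kA; rewrite /in_ideal_at seg_atE. Qed.

Lemma minC_seg_pt k : 0 < k < A ->
  minC alpha I (seg_pt k) = (seg_pt k \notin I) && in_ideal_at k.-1.
Proof.
move=> kA; have eu := seg_atE kA; have kA' : k.-1 <= A by lia.
rewrite /minC; congr (_ && _); apply/forallP/idP => [below | dI w]; last first.
  apply/implyP => wI; apply/negP => /(flt_seg_at_down kA eu) [d ed wd].
  by move: dI; rewrite /in_ideal_at ed => /(I_ideal wd); rewrite (negbTE wI).
rewrite /in_ideal_at; case ed: (seg_at k.-1) => [d|]; last first.
  by have [-> | ] := seg_at_none kA' ed; lia.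
apply/negPn/negP => dI; move/implyP: (below d) => /(_ dI).
by rewrite (@flt_seg_at k.-1 k) //; lia.
Qed.

Lemma maxI_seg_pt k : 0 < k < A ->
  maxI alpha I (seg_pt k) = (seg_pt k \in I) && ~~ in_ideal_at k.+1.
Proof.
move=> kA; have eu := seg_atE kA.
rewrite /maxI; congr (_ && _); apply/forallP/idP => [above | dnI w]; last first.
  apply/implyP => wI; apply/negP => /(flt_seg_at_up kA eu) [d ed dw].
  by move: dnI; rewrite /in_ideal_at ed (I_ideal dw wI).
rewrite /in_ideal_at; case ed: (seg_at k.+1) => [d|] //.
apply/negP => dI; move/implyP: (above d) => /(_ dI).
by rewrite (@flt_seg_at k k.+1) //; lia.
Qed.

Lemma Tst_seg_pt k : 0 < k < A ->
  Tst alpha (Some (seg_pt k)) I = diff2 (fun h => (in_ideal_at h)%:Z%R) k.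
Proof.
move=> kA; rewrite /Tst minC_seg_pt // maxI_seg_pt // -in_ideal_at_seg_pt //.
have m1 : in_ideal_at k ==> in_ideal_at k.-1.
  by apply/implyP; rewrite -{1}[k](prednK (proj1 (andP kA))); apply: in_ideal_atW; lia.
have m2 : in_ideal_at k.+1 ==> in_ideal_at k by apply/implyP/in_ideal_atW; lia.
by move: m1 m2; rewrite /diff2; case: (in_ideal_at k.-1); case: (in_ideal_at k);
  case: (in_ideal_at k.+1).
Qed.

Local Notation ind := (fun h => (in_ideal_at h)%:Z%R).

Lemma sum_lower_interval j : 0 < j < A ->
  (\sum_(u | fle (seg_pt 1) u && fle u (seg_pt j))
     (icard alpha (Some (seg_pt 1)) (Some u))%:Z * Tst alpha (Some u) I
   = \sum_(1 <= h < j.+1) h%:R * diff2 ind h)%R.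
Proof.
move=> jA; rewrite (@big_seg_chain _ 1 j) //; last 2 first.
- by lia.
- by move=> u; rewrite mem_seg_chain //; lia.
apply: eq_big_nat => h hj; rewrite icard_seg_pt ?Tst_seg_pt ?subn1 ?natz //; lia.
Qed.

Lemma sum_upper_interval j : 0 < j < A ->
  (\sum_(u | flt alpha (seg_pt j) u && fle u (seg_pt A.-1))
     (icard alpha (Some u) (Some (seg_pt A.-1)))%:Z * Tst alpha (Some u) I
   = \sum_(j.+1 <= h < A) (A%:R - h%:R) * diff2 ind h)%R.
Proof.
move=> jA; rewrite (@big_seg_chain _ j.+1 A.-1) //; last 2 first.
- by lia.
- by move=> u; rewrite mem_seg_chainS //; lia.
rewrite prednK; last by lia.
apply: eq_big_nat => h hj; rewrite icard_seg_pt ?Tst_seg_pt ?prednK -?natrB ?natz //; lia.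
Qed.

Lemma chi_peak : chi alpha (seg_at A) I = ind A.
Proof. by rewrite /in_ideal_at; case: seg_at => //=; case: A two_le_alphai. Qed.

Lemma chi_valley :
  chi alpha (seg_at 0) I = (ind 0 - (if seg_at 0 is None then 1 else 0))%R.
Proof. by rewrite /in_ideal_at; case: seg_at => /= [u|]; rewrite ?subr0. Qed.

End Segment.
End Fence.

Local Open Scope ring_scope.

Theorem theorem4p1 (alpha : seq nat) (i j : nat) (I : {set 'I_(fn alpha)}) :
  (2 <= size alpha)%N ->
  all (fun a => 0 < a)%N alpha ->
  (2 <= alph alpha 1)%N -> (2 <= alph alpha (size alpha))%N ->
  (1 <= i <= size alpha)%N -> (2 <= alph alpha i)%N ->
  (1 <= j <= beta alpha i)%N ->
  is_ideal alpha I ->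
  (alph alpha i)%:Z * chi alpha (sel alpha i j) I
    - j%:Z * chi alpha (peakS alpha i) I
    - ((alph alpha i)%:Z - j%:Z) * chi alpha (valleyS alpha i) I
  = (if valleyS alpha i is None then (alph alpha i)%:Z - j%:Z else 0)
    - ((alph alpha i)%:Z - j%:Z) *
        (\sum_(u : 'I_(fn alpha) | ole alpha (sel alpha i 1) (Some u)
                                   && ole alpha (Some u) (sel alpha i j))
            (icard alpha (sel alpha i 1) (Some u))%:Z * Tst alpha (Some u) I)
    - j%:Z *
        (\sum_(u : 'I_(fn alpha) | olt alpha (sel alpha i j) (Some u)
                                   && ole alpha (Some u) (sel alpha i (beta alpha i)))
            (icard alpha (Some u) (sel alpha i (beta alpha i)))%:Z * Tst alpha (Some u) I).
Proof.
move=> two_le_t alpha_gt0 two_le_alpha1 two_le_alphat i_in two_le_alphai j_in I_ideal.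
have jA : (0 < j < alph alpha i)%N by move: j_in; rewrite /beta; lia.
have -> : beta alpha i = (alph alpha i).-1 by rewrite /beta subn1.
rewrite !sel_seg_pt //; try lia.
rewrite peakS_seg_at // valleyS_seg_at // /= sum_lower_interval // sum_upper_interval //.
rewrite -in_ideal_at_seg_pt // chi_peak // chi_valley //.
have := diff2_green (fun h => (in_ideal_at i I h)%:Z) (proj2 (andP jA)).
rewrite !natz => green; rewrite -[RHS]addrA -opprD green.
by case: seg_at => [_|]; ring.
Qed.
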